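(* Let $n\ge 1$, $0\le m\le n$, and fix $\chi\in\mathcal C^\infty_0(\mathbb R)$ with $0\le\chi\le1$, $\chi\equiv1$ on $[-1/2,1/2]$ and $\mathrm{supp}\,\chi\subset(-1,1)$. Let $0<\mu<1$ and $\mu'>0$. Then there exists $0<\delta_0<1$ such that the following holds. Let $0<\epsilon<1$, and let $\rho(z)=\sum_{j=1}^m(x_j^2+\mu_jy_j^2)+\sum_{j=m+1}^n(x_j^2-\mu_jy_j^2)$ on $\mathbb B^n_\epsilon\subset\mathbb C^n$ ($z_j=x_j+iy_j$), with $\mu'\le\mu_j\le1$ for $j=1,\dots,m$ and $0\le\mu_j\le\mu$ for $j=m+1,\dots,n$. Let $\delta_{m+1},\dots,\delta_n$ satisfy $0<\delta_j\le\mu_j$ and $\delta_j<\delta_0$, and set $\psi_{\epsilon,\delta}(z):=\chi(\|z\|^2/\epsilon^2)\sum_{j=m+1}^n\delta_jy_j^2$. Then $\rho_{\epsilon,\delta}:=\rho+\psi_{\epsilon,\delta}$ is strictly plurisubharmonic on $\mathbb B^n_\epsilon$, and all its critical points in $\mathbb B^n_\epsilon$ lie in $\{\rho_{\epsilon,\delta}\le0\}$.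
   Context: $\mathbb B^n_\epsilon$ is the open ball of radius $\epsilon$ about $0$ in $\mathbb C^n$. *)

From Stdlib Require Import Reals.
From Coquelicot Require Import Coquelicot.
Open Scope R_scope.

(* A point z of C^n, z_j = x_j + i y_j (j = 1..n), is encoded by its real
   coordinates (x, y) : (nat -> R) * (nat -> R); only indices 1..n are used. *)
Definition pt := ((nat -> R) * (nat -> R))%type.

Definition padd (p : pt) (t : R) (v : pt) : pt :=
  (fun j => fst p j + t * fst v j, fun j => snd p j + t * snd v j).

Definition Jmul (v : pt) : pt := (fun j => - snd v j, fun j => fst v j).

Definition normsq (n : nat) (p : pt) : R :=
  sum_n_m (fun j => fst p j ^ 2 + snd p j ^ 2) 1 n.

Definition ball_n (n : nat) (eps : R) (p : pt) : Prop := normsq n p < eps ^ 2.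

Definition smooth (chi : R -> R) : Prop := forall k t, ex_derive_n chi k t.

(* supp chi (closure of {chi <> 0}) is contained in (-1,1) *)
Definition supp_in_m1_1 (chi : R -> R) : Prop :=
  forall t, (forall e, 0 < e -> exists s, Rabs (s - t) < e /\ chi s <> 0) ->
            -1 < t < 1.

Definition rho (n m : nat) (mu : nat -> R) (p : pt) : R :=
  sum_n_m (fun j => fst p j ^ 2 + mu j * snd p j ^ 2) 1 m
  + sum_n_m (fun j => fst p j ^ 2 - mu j * snd p j ^ 2) (m + 1) n.

Definition psi (n m : nat) (chi : R -> R) (eps : R) (delta : nat -> R) (p : pt) : R :=
  chi (normsq n p / eps ^ 2) * sum_n_m (fun j => delta j * snd p j ^ 2) (m + 1) n.

Definition supported (n : nat) (v : pt) : Prop :=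
  forall j, (j < 1 \/ n < j)%nat -> fst v j = 0 /\ snd v j = 0.
Definition nonzero (n : nat) (v : pt) : Prop :=
  exists j, (1 <= j <= n)%nat /\ (fst v j <> 0 \/ snd v j <> 0).

Definition d2dir (f : pt -> R) (p v : pt) : R :=
  Derive_n (fun t => f (padd p t v)) 2 0.

(* Levi form (complex Hessian) sum_{j,k} d^2 f/dz_j dzbar_k (p) w_j conj(w_k),
   written via the identity  L_p(w) = (D^2 f(p)[v,v] + D^2 f(p)[iv,iv]) / 4,
   where v is the real vector of w. *)
Definition levi (f : pt -> R) (p v : pt) : R :=
  (d2dir f p v + d2dir f p (Jmul v)) / 4.

Definition strictly_psh_on (n : nat) (U : pt -> Prop) (f : pt -> R) : Prop :=
  forall p, U p -> forall v, supported n v -> nonzero n v ->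
    ex_derive_n (fun t => f (padd p t v)) 2 0 /\
    ex_derive_n (fun t => f (padd p t (Jmul v))) 2 0 /\
    levi f p v > 0.

Definition ex_dir (j : nat) : pt := (fun k => if Nat.eqb k j then 1 else 0, fun _ => 0).
Definition ey_dir (j : nat) : pt := (fun _ => 0, fun k => if Nat.eqb k j then 1 else 0).

Definition critical_point (n : nat) (f : pt -> R) (p : pt) : Prop :=
  forall j, (1 <= j <= n)%nat ->
    is_derive (fun t => f (padd p t (ex_dir j))) 0 0 /\
    is_derive (fun t => f (padd p t (ey_dir j))) 0 0.

From Pilot Require Import Defs.
From Stdlib Require Import Reals Lra Lia Psatz.
From Coquelicot Require Import Coquelicot.
Open Scope R_scope.

(* On a real line p + t v, rho is a quadratic polynomial in t and psi = chi(N/eps^2) Q is the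
   cutoff times a quadratic polynomial, where N is the squared norm and Q <= delta0 N.  In the
   second derivative, the terms carrying chi' and chi'' are bounded, by Cauchy-Schwarz and
   N(p) < eps^2, by a constant times delta0 |v|^2; for small delta0 they are dominated by the
   Levi form of rho, which is at least (1 - mu) |v|^2.  At a critical point, the partial
   derivative in x_j (and in y_j, j <= m) is that of rho times 1 + c (resp. mu_j + c) with
   |c| <= delta0 sup|chi'| small, so these coordinates vanish, and what remains of
   rho + psi is at most sum_{j>m} (delta_j - mu_j) y_j^2 <= 0. *)

Lemma sum_n_m_addR (f g : nat -> R) lo hi :
  sum_n_m (fun j => f j + g j) lo hi = sum_n_m f lo hi + sum_n_m g lo hi.
Proof. exact (sum_n_m_plus f g lo hi). Qed.

Lemma sum_n_m_scalR (c : R) (f : nat -> R) lo hi :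
  sum_n_m (fun j => c * f j) lo hi = c * sum_n_m f lo hi.
Proof. exact (sum_n_m_mult_l c f lo hi). Qed.

Lemma sum_n_m_zeroR lo hi : sum_n_m (fun _ => 0) lo hi = 0.
Proof. exact (sum_n_m_const_zero (G := R_AbelianMonoid) lo hi). Qed.

Lemma sum_n_m_le_loc (f g : nat -> R) lo hi :
  (forall k, (lo <= k <= hi)%nat -> f k <= g k) -> sum_n_m f lo hi <= sum_n_m g lo hi.
Proof.
  intro Hfg.
  rewrite (sum_n_m_ext_loc f (fun k => Rmin (f k) (g k))).
  - apply sum_n_m_le; intro k; apply Rmin_r.
  - intros k Hk; rewrite Rmin_left; auto.
Qed.

Lemma sum_n_m_ge0 (f : nat -> R) lo hi :
  (forall k, (lo <= k <= hi)%nat -> 0 <= f k) -> 0 <= sum_n_m f lo hi.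
Proof.
  intro Hf.
  rewrite <- (sum_n_m_zeroR lo hi).
  exact (sum_n_m_le_loc (fun _ => 0) f lo hi Hf).
Qed.

Lemma sum_n_m_split (f : nat -> R) lo m hi : (lo <= S m)%nat -> (m <= hi)%nat ->
  sum_n_m f lo hi = sum_n_m f lo m + sum_n_m f (S m) hi.
Proof. exact (sum_n_m_Chasles f lo m hi). Qed.

Lemma sum_n_m_single_term (f : nat -> R) j lo hi :
  (1 <= lo <= j)%nat -> (j <= hi)%nat ->
  (forall k, (lo <= k <= hi)%nat -> k <> j -> f k = 0) ->
  sum_n_m f lo hi = f j.
Proof.
  intros Hlo Hhi Hf.
  rewrite (sum_n_m_split f lo j hi), (sum_n_m_split f lo (pred j) j) by lia.
  rewrite (sum_n_m_ext_loc f (fun _ => 0) lo (pred j)) by (intros k Hk; apply Hf; lia).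
  rewrite (sum_n_m_ext_loc f (fun _ => 0) (S j) hi) by (intros k Hk; apply Hf; lia).
  rewrite !sum_n_m_zeroR.
  replace (S (pred j)) with j by lia.
  rewrite sum_n_n; simpl; unfold plus, zero; simpl; ring.
Qed.

Lemma sum_n_m_ge_term (f : nat -> R) j lo hi :
  (1 <= lo <= j)%nat -> (j <= hi)%nat -> (forall k, (lo <= k <= hi)%nat -> 0 <= f k) ->
  f j <= sum_n_m f lo hi.
Proof.
  intros Hlo Hhi Hf.
  rewrite (sum_n_m_split f lo j hi), (sum_n_m_split f lo (pred j) j) by lia.
  replace (S (pred j)) with j by lia.
  rewrite sum_n_n.
  assert (0 <= sum_n_m f lo (pred j)) by (apply sum_n_m_ge0; intros; apply Hf; lia).
  assert (0 <= sum_n_m f (S j) hi) by (apply sum_n_m_ge0; intros; apply Hf; lia).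
  simpl; unfold plus; simpl; lra.
Qed.

Definition cst (c : R) : nat -> R := fun _ => c.

Definition qform (n : nat) (a b : nat -> R) (p : pt) : R :=
  sum_n_m (fun j => a j * fst p j ^ 2 + b j * snd p j ^ 2) 1 n.

Definition qpolar (n : nat) (a b : nat -> R) (p v : pt) : R :=
  sum_n_m (fun j => 2 * (a j * fst p j * fst v j + b j * snd p j * snd v j)) 1 n.

Lemma qform_padd n a b p t v :
  qform n a b (padd p t v) = qform n a b p + t * qpolar n a b p v + t ^ 2 * qform n a b v.
Proof.
  unfold qform, qpolar; rewrite <- !sum_n_m_scalR, <- !sum_n_m_addR.
  apply sum_n_m_ext; intro j; simpl; ring.
Qed.

Lemma qform_ge0 n a b p : (forall j, (1 <= j <= n)%nat -> 0 <= a j /\ 0 <= b j) ->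
  0 <= qform n a b p.
Proof.
  intro Hab; apply sum_n_m_ge0; intros j Hj.
  destruct (Hab j Hj); pose proof (pow2_ge_0 (fst p j)); pose proof (pow2_ge_0 (snd p j)); nra.
Qed.

Lemma qform_le n a b a' b' p :
  (forall j, (1 <= j <= n)%nat -> a j <= a' j /\ b j <= b' j) ->
  qform n a b p <= qform n a' b' p.
Proof.
  intro Hab; apply sum_n_m_le_loc; intros j Hj.
  destruct (Hab j Hj); pose proof (pow2_ge_0 (fst p j)); pose proof (pow2_ge_0 (snd p j)); nra.
Qed.

Lemma qform_scal n c a b p :
  qform n (fun j => c * a j) (fun j => c * b j) p = c * qform n a b p.
Proof. unfold qform; rewrite <- sum_n_m_scalR; apply sum_n_m_ext; intro j; simpl; ring. Qed.

Lemma qform_add n a b a' b' p :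
  qform n a b p + qform n a' b' p = qform n (fun j => a j + a' j) (fun j => b j + b' j) p.
Proof. unfold qform; rewrite <- sum_n_m_addR; apply sum_n_m_ext; intro j; simpl; ring. Qed.

Lemma nonneg_quadratic_discr (a b c : R) :
  0 <= a -> (forall t, 0 <= c + t * b + t ^ 2 * a) -> b ^ 2 <= 4 * a * c.
Proof.
  intros Ha Hq; destruct (Req_dec a 0) as [Ha0 | Ha0].
  - subst a; destruct (Req_dec b 0) as [Hb0 | Hb0]; [subst b; lra |].
    specialize (Hq (- (c + 1) / b)).
    replace (c + - (c + 1) / b * b + (- (c + 1) / b) ^ 2 * 0) with (-1) in Hq by (field; auto).
    lra.
  - specialize (Hq (- b / (2 * a))).
    replace (c + - b / (2 * a) * b + (- b / (2 * a)) ^ 2 * a) with ((4 * a * c - b ^ 2) / (4 * a))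
      in Hq by (field; lra).
    assert (Hpos : 0 < 4 * a) by lra.
    apply Rmult_le_compat_r with (r := 4 * a) in Hq; [| lra].
    unfold Rdiv in Hq; rewrite Rmult_assoc, Rinv_l in Hq by lra; lra.
Qed.

Lemma qpolar_sq_le n a b p v : (forall j, (1 <= j <= n)%nat -> 0 <= a j /\ 0 <= b j) ->
  qpolar n a b p v ^ 2 <= 4 * qform n a b v * qform n a b p.
Proof.
  intro Hab; apply nonneg_quadratic_discr; [now apply qform_ge0 |].
  intro t; rewrite <- qform_padd; now apply qform_ge0.
Qed.

Lemma qform_Jmul n a b v : qform n a b (Jmul v) = qform n b a v.
Proof. unfold qform; apply sum_n_m_ext; intro j; simpl; ring. Qed.

Lemma qform_norm_pos n v : Defs.nonzero n v -> 0 < qform n (cst 1) (cst 1) v.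
Proof.
  intros [j [Hj Hv]].
  assert (Hsq : forall x, x <> 0 -> 0 < x ^ 2)
    by (intros x Hx; rewrite <- Rsqr_pow2; now apply Rsqr_pos_lt).
  apply Rlt_le_trans with (cst 1 j * fst v j ^ 2 + cst 1 j * snd v j ^ 2).
  - unfold cst; pose proof (pow2_ge_0 (fst v j)); pose proof (pow2_ge_0 (snd v j)).
    destruct Hv as [Hv | Hv]; apply Hsq in Hv; lra.
  - apply (sum_n_m_ge_term (fun k => cst 1 k * fst v k ^ 2 + cst 1 k * snd v k ^ 2)); try lia.
    intros k _; unfold cst; pose proof (pow2_ge_0 (fst v k)); pose proof (pow2_ge_0 (snd v k)); lra.
Qed.

Lemma qpolar_ex_dir n a b p j : (1 <= j <= n)%nat ->
  qpolar n a b p (ex_dir j) = 2 * a j * fst p j.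
Proof.
  intro Hj; unfold qpolar; rewrite (sum_n_m_single_term _ j) by
    (try lia; intros k _ Hk; simpl; apply Nat.eqb_neq in Hk; rewrite Hk; ring).
  simpl; rewrite Nat.eqb_refl; ring.
Qed.

Lemma qpolar_ey_dir n a b p j : (1 <= j <= n)%nat ->
  qpolar n a b p (ey_dir j) = 2 * b j * snd p j.
Proof.
  intro Hj; unfold qpolar; rewrite (sum_n_m_single_term _ j) by
    (try lia; intros k _ Hk; simpl; apply Nat.eqb_neq in Hk; rewrite Hk; ring).
  simpl; rewrite Nat.eqb_refl; ring.
Qed.

Definition quad (a0 a1 a2 t : R) : R := a0 + t * a1 + t ^ 2 * a2.

Section CutoffOnQuadratics.

Variable chi : R -> R.
Hypothesis chi_smooth : smooth chi.
Variables R0 R1 R2 N0 N1 N2 Q0 Q1 Q2 : R.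

Let g t := quad R0 R1 R2 t + chi (quad N0 N1 N2 t) * quad Q0 Q1 Q2 t.
Let g' t := R1 + 2 * t * R2 + Derive chi (quad N0 N1 N2 t) * (N1 + 2 * t * N2) * quad Q0 Q1 Q2 t
            + chi (quad N0 N1 N2 t) * (Q1 + 2 * t * Q2).

Let chi_derivable t : ex_derive chi t := chi_smooth 1%nat t.
Let chi'_derivable t : ex_derive (Derive chi) t := chi_smooth 2%nat t.

Let g_derive t : is_derive g t (g' t).
Proof.
  unfold g, g', quad; auto_derive; [apply chi_derivable |].
  change (fun x => chi x) with chi; replace (t * (t * 1)) with (t ^ 2) by ring; ring.
Qed.

Lemma is_derive_cutoff_quad : is_derive g 0 (R1 + Derive chi N0 * N1 * Q0 + chi N0 * Q1).
Proof.
  replace (R1 + Derive chi N0 * N1 * Q0 + chi N0 * Q1) with (g' 0) by (unfold g', quad; ring_simplify (N0 + 0 * N1 + 0 ^ 2 * N2); ring).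
  apply g_derive.
Qed.

Lemma Derive2_cutoff_quad : ex_derive_n g 2 0 /\
  Derive_n g 2 0 = 2 * R2 + (Derive (Derive chi) N0 * N1 ^ 2 * Q0 + Derive chi N0 * (2 * N2) * Q0
                             + 2 * Derive chi N0 * N1 * Q1 + chi N0 * (2 * Q2)).
Proof.
  assert (Dg : forall t, Derive g t = g' t) by (intro t; apply is_derive_unique, g_derive).
  assert (Dg' : is_derive g' 0 (2 * R2 + (Derive (Derive chi) N0 * N1 ^ 2 * Q0
            + Derive chi N0 * (2 * N2) * Q0 + 2 * Derive chi N0 * N1 * Q1 + chi N0 * (2 * Q2)))).
  { unfold g', quad; auto_derive; [repeat split; auto |].
    change (fun x => chi x) with chi; change (fun x => Derive chi x) with (Derive chi).
    replace (N0 + 0 * N1 + 0 * (0 * 1) * N2) with N0 by ring; ring. }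
  split; simpl.
  - apply ex_derive_ext with g'; [intro t; now rewrite Dg | eexists; exact Dg'].
  - rewrite (Derive_ext _ _ _ Dg); now apply is_derive_unique.
Qed.

End CutoffOnQuadratics.

Definition rho_weight (m : nat) (muj : nat -> R) (j : nat) : R :=
  if (j <=? m)%nat then muj j else - muj j.

Definition cutoff_weight (m : nat) (delta : nat -> R) (j : nat) : R :=
  if (j <=? m)%nat then 0 else delta j.

Lemma normsq_qform n p : normsq n p = qform n (cst 1) (cst 1) p.
Proof. unfold normsq, qform, cst; apply sum_n_m_ext; intro j; simpl; ring. Qed.

Lemma rho_qform n m muj p : (m <= n)%nat ->
  rho n m muj p = qform n (cst 1) (rho_weight m muj) p.
Proof.
  intro Hmn; unfold rho, qform; rewrite Nat.add_1_r, (sum_n_m_split _ 1 m n) by lia.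
  f_equal; apply sum_n_m_ext_loc; intros j Hj; unfold rho_weight, cst.
  - replace (j <=? m)%nat with true by (symmetry; apply Nat.leb_le; lia); simpl; ring.
  - replace (j <=? m)%nat with false by (symmetry; apply Nat.leb_gt; lia); simpl; ring.
Qed.

Lemma psi_qform n m chi eps delta p : (m <= n)%nat ->
  psi n m chi eps delta p
  = chi (qform n (cst 1) (cst 1) p / eps ^ 2) * qform n (cst 0) (cutoff_weight m delta) p.
Proof.
  intro Hmn; unfold psi; rewrite normsq_qform; f_equal.
  unfold qform; rewrite Nat.add_1_r, (sum_n_m_split _ 1 m n) by lia.
  rewrite (sum_n_m_ext_loc _ (fun _ => 0) 1 m), sum_n_m_zeroR.
  - rewrite Rplus_0_l; apply sum_n_m_ext_loc; intros j Hj; unfold cutoff_weight, cst.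
    replace (j <=? m)%nat with false by (symmetry; apply Nat.leb_gt; lia); simpl; ring.
  - intros j Hj; unfold cutoff_weight, cst.
    replace (j <=? m)%nat with true by (symmetry; apply Nat.leb_le; lia); simpl; ring.
Qed.

Lemma derivable_bounded_01 (f : R -> R) : (forall t, ex_derive f t) ->
  exists M, 0 <= M /\ forall s, 0 <= s <= 1 -> Rabs (f s) <= M.
Proof.
  intro Hf.
  assert (Hc : forall c, continuity_pt f c)
    by (intro c; apply continuity_pt_filterlim, (ex_derive_continuous f c), Hf).
  destruct (continuity_ab_maj f 0 1) as [a [Ha _]]; [lra | intros; apply Hc |].
  destruct (continuity_ab_maj (opp_fct f) 0 1) as [b [Hb _]];
    [lra | intros; apply continuity_pt_opp, Hc |].
  unfold opp_fct in Hb.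
  exists (Rabs (f a) + Rabs (f b)); split; [pose proof (Rabs_pos (f a)); pose proof (Rabs_pos (f b)); lra |].
  intros s Hs; specialize (Ha s Hs); specialize (Hb s Hs).
  pose proof (Rle_abs (f a)); pose proof (Rabs_maj2 (f b)); pose proof (Rabs_pos (f a)).
  pose proof (Rabs_pos (f b)); apply Rabs_le; split; lra.
Qed.

Lemma opp_mul_le_of_abs (D X M B : R) : Rabs D <= M -> Rabs X <= B -> - (M * B) <= D * X.
Proof.
  intros HD HX; pose proof (Rabs_maj2 (D * X)).
  assert (Rabs (D * X) <= M * B)
    by (rewrite Rabs_mult; apply Rmult_le_compat; auto using Rabs_pos).
  lra.
Qed.

(* With N = N0 + t N1 + t^2 V the squared norm along a line (N0 < E inside the ball) and
   Q = Q0 + t Q1 + t^2 Q2 <= d0 N, the right-hand side is (chi(N/E) Q)'' at t = 0, with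
   chi, chi', chi'' evaluated at N0/E written c, D1, D2. *)
Lemma cutoff_second_order_bound (D1 D2 c N0 N1 V Q0 Q1 Q2 E d0 M1 M2 : R) :
  Rabs D1 <= M1 -> Rabs D2 <= M2 -> 0 <= c -> 0 <= d0 ->
  0 <= N0 < E -> 0 <= V -> N1 ^ 2 <= 4 * V * N0 ->
  0 <= Q0 <= d0 * N0 -> 0 <= Q2 <= d0 * V -> Q1 ^ 2 <= 4 * Q2 * Q0 ->
  - ((4 * M2 + 10 * M1) * d0 * V)
  <= D2 * (N1 / E) ^ 2 * Q0 + D1 * (2 * (V / E)) * Q0 + 2 * D1 * (N1 / E) * Q1 + c * (2 * Q2).
Proof.
  intros HD1 HD2 Hc Hd0 [HN0 HN0E] HV HN1 [HQ0 HQ0N] [HQ2 HQ2V] HQ1.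
  assert (HE : 0 < E) by lra.
  assert (Hd0V : 0 <= d0 * V) by lra.
  set (r := N0 / E); set (u := N1 / E).
  assert (EN0 : N0 = r * E) by (unfold r; field; lra).
  assert (Hr : 0 <= r < 1) by (split; nra).
  assert (EN1 : N1 = u * E) by (unfold u; field; lra).
  rewrite EN0 in HN1, HQ0N; rewrite EN1 in HN1.
  assert (Hu : u ^ 2 * E <= 4 * V * r) by nra.
  assert (Hr2 : r * r <= 1) by nra.
  assert (HdVE : 0 <= d0 * V * E) by nra.
  assert (A1 : Rabs (u ^ 2 * Q0) <= 4 * d0 * V).
  { rewrite Rabs_pos_eq by nra.
    apply Rmult_le_reg_r with E; [lra |].
    assert (u ^ 2 * E * Q0 <= 4 * V * r * (d0 * r * E)) by (apply Rmult_le_compat; nra).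
    replace (4 * V * r * (d0 * r * E)) with (4 * (d0 * V * E) * (r * r)) in H by ring.
    nra. }
  assert (A2 : Rabs (2 * (V / E) * Q0) <= 2 * d0 * V).
  { replace (2 * (V / E) * Q0) with (2 * V * (Q0 / E)) by (field; lra).
    assert (Hq : Q0 / E * E = Q0) by (field; lra).
    assert (0 <= Q0 / E <= d0 * r) by (split; nra).
    rewrite Rabs_pos_eq by nra; nra. }
  assert (A3 : Rabs (u * Q1) <= 4 * d0 * V).
  { rewrite <- (Rabs_pos_eq (4 * d0 * V)) by lra; apply Rsqr_le_abs_0; unfold Rsqr.
    apply Rmult_le_reg_r with E; [lra |].
    assert (u ^ 2 * E * Q1 ^ 2 <= 4 * V * r * (4 * Q2 * Q0)) by (apply Rmult_le_compat; nra).
    assert (Q2 * Q0 <= d0 * V * (d0 * r * E)) by (apply Rmult_le_compat; lra).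
    assert (16 * V * r * (Q2 * Q0) <= 16 * V * r * (d0 * V * (d0 * r * E)))
      by (apply Rmult_le_compat_l; nra).
    assert (0 <= (d0 * V) ^ 2 * E) by nra.
    replace (u * Q1 * (u * Q1) * E) with (u ^ 2 * E * Q1 ^ 2) by ring.
    replace (16 * V * r * (d0 * V * (d0 * r * E))) with ((d0 * V) ^ 2 * E * (16 * (r * r))) in * by ring.
    nra. }
  pose proof (opp_mul_le_of_abs D2 (u ^ 2 * Q0) M2 (4 * d0 * V) HD2 A1).
  pose proof (opp_mul_le_of_abs D1 (2 * (V / E) * Q0) M1 (2 * d0 * V) HD1 A2).
  pose proof (opp_mul_le_of_abs D1 (u * Q1) M1 (4 * d0 * V) HD1 A3).
  assert (0 <= c * (2 * Q2)) by nra.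
  replace (D2 * u ^ 2 * Q0 + D1 * (2 * (V / E)) * Q0 + 2 * D1 * u * Q1 + c * (2 * Q2))
    with (D2 * (u ^ 2 * Q0) + D1 * (2 * (V / E) * Q0) + 2 * (D1 * (u * Q1)) + c * (2 * Q2)) by ring.
  lra.
Qed.

Lemma small_factor (K c : R) : 0 <= K -> 0 < c -> exists d, 0 < d < 1 /\ K * d < c.
Proof.
  intros HK Hc; exists (Rmin (1 / 2) (c / (K + 1))); split; [split |].
  - apply Rmin_glb_lt; [lra | apply Rdiv_lt_0_compat; lra].
  - apply Rle_lt_trans with (1 / 2); [apply Rmin_l | lra].
  - apply Rle_lt_trans with (K * (c / (K + 1))).
    + apply Rmult_le_compat_l; [lra | apply Rmin_r].
    + apply Rmult_lt_reg_r with (K + 1); [lra |].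
      replace (K * (c / (K + 1)) * (K + 1)) with (K * c) by (field; lra); nra.
Qed.

Section Deformation.

Variables (n m : nat) (muj delta : nat -> R) (chi : R -> R) (eps : R).
Hypothesis m_le_n : (m <= n)%nat.
Hypothesis chi_smooth : smooth chi.
Hypothesis eps_pos : 0 < eps.

Let F (p : pt) : R := rho n m muj p + psi n m chi eps delta p.
Let N := qform n (cst 1) (cst 1).
Let N' := qpolar n (cst 1) (cst 1).
Let Rh := qform n (cst 1) (rho_weight m muj).
Let Rh' := qpolar n (cst 1) (rho_weight m muj).
Let Q := qform n (cst 0) (cutoff_weight m delta).
Let Q' := qpolar n (cst 0) (cutoff_weight m delta).

Lemma F_on_line p v t : F (padd p t v) =
  quad (Rh p) (Rh' p v) (Rh v) t
  + chi (quad (N p / eps ^ 2) (N' p v / eps ^ 2) (N v / eps ^ 2) t) * quad (Q p) (Q' p v) (Q v) t.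
Proof.
  unfold F; rewrite rho_qform, psi_qform, !qform_padd by exact m_le_n.
  unfold quad, Rh, Rh', N, N', Q, Q', Rdiv; rewrite !Rmult_plus_distr_r, !Rmult_assoc; ring.
Qed.

Lemma F_derive_on_line p v : is_derive (fun t => F (padd p t v)) 0
  (Rh' p v + Derive chi (N p / eps ^ 2) * (N' p v / eps ^ 2) * Q p + chi (N p / eps ^ 2) * Q' p v).
Proof.
  eapply is_derive_ext; [intro t; symmetry; apply F_on_line |].
  now apply is_derive_cutoff_quad.
Qed.

Lemma F_d2dir p v : ex_derive_n (fun t => F (padd p t v)) 2 0 /\
  d2dir F p v = 2 * Rh v
    + (Derive (Derive chi) (N p / eps ^ 2) * (N' p v / eps ^ 2) ^ 2 * Q p
       + Derive chi (N p / eps ^ 2) * (2 * (N v / eps ^ 2)) * Q p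
       + 2 * Derive chi (N p / eps ^ 2) * (N' p v / eps ^ 2) * Q' p v
       + chi (N p / eps ^ 2) * (2 * Q v)).
Proof.
  destruct (Derive2_cutoff_quad chi chi_smooth (Rh p) (Rh' p v) (Rh v)
              (N p / eps ^ 2) (N' p v / eps ^ 2) (N v / eps ^ 2) (Q p) (Q' p v) (Q v)) as [Hex HD].
  unfold d2dir; split.
  - eapply ex_derive_n_ext; [intro t; symmetry; apply F_on_line | exact Hex].
  - rewrite (Derive_n_ext _ _ 2 0 (F_on_line p v)); exact HD.
Qed.

Variables (M1 M2 d0 : R).
Hypothesis chi_range : forall t, 0 <= chi t <= 1.
Hypothesis chi'_bound : forall s, 0 <= s <= 1 -> Rabs (Derive chi s) <= M1.
Hypothesis chi''_bound : forall s, 0 <= s <= 1 -> Rabs (Derive (Derive chi) s) <= M2.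
Hypothesis d0_ge0 : 0 <= d0.
Hypothesis delta_bound : forall j, (m + 1 <= j <= n)%nat -> 0 <= delta j <= d0.

Let cutoff_weight_bound j : (1 <= j <= n)%nat -> 0 <= cutoff_weight m delta j <= d0.
Proof.
  intro Hj; unfold cutoff_weight; destruct (Nat.leb_spec j m); [lra | apply delta_bound; lia].
Qed.

Let Q_le_N p : 0 <= Q p <= d0 * N p.
Proof.
  split.
  - apply qform_ge0; intros j Hj; unfold cst; pose proof (cutoff_weight_bound j Hj); lra.
  - unfold Q, N; rewrite <- qform_scal; apply qform_le; intros j Hj.
    unfold cst; pose proof (cutoff_weight_bound j Hj); lra.
Qed.

Let ball_ratio p : ball_n n eps p -> 0 <= N p / eps ^ 2 <= 1.
Proof.
  intro Hp; unfold ball_n in Hp; rewrite normsq_qform in Hp; fold N in Hp.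
  assert (0 < eps ^ 2) by (apply pow_lt; lra).
  assert (0 <= N p) by (apply qform_ge0; unfold cst; intros; lra).
  assert (N p / eps ^ 2 * eps ^ 2 = N p) by (field; lra).
  split; nra.
Qed.

Lemma F_d2dir_lower_bound p v : ball_n n eps p ->
  ex_derive_n (fun t => F (padd p t v)) 2 0 /\
  2 * Rh v - (4 * M2 + 10 * M1) * d0 * N v <= d2dir F p v.
Proof.
  intro Hp; destruct (F_d2dir p v) as [Hex ->]; split; [exact Hex |].
  assert (Hnorm : forall j, (1 <= j <= n)%nat -> 0 <= cst 1 j /\ 0 <= cst 1 j)
    by (unfold cst; intros; lra).
  assert (Hcut : forall j, (1 <= j <= n)%nat -> 0 <= cst 0 j /\ 0 <= cutoff_weight m delta j)
    by (intros j Hj; unfold cst; pose proof (cutoff_weight_bound j Hj); lra).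
  assert (HNp : 0 <= N p < eps ^ 2).
  { split; [now apply qform_ge0 |]; unfold ball_n in Hp; now rewrite normsq_qform in Hp. }
  set (s := N p / eps ^ 2).
  pose proof (cutoff_second_order_bound (Derive chi s) (Derive (Derive chi) s) (chi s)
    (N p) (N' p v) (N v) (Q p) (Q' p v) (Q v) (eps ^ 2) d0 M1 M2
    (chi'_bound _ (ball_ratio p Hp)) (chi''_bound _ (ball_ratio p Hp)) (proj1 (chi_range _))
    d0_ge0 HNp (qform_ge0 n _ _ v Hnorm) (qpolar_sq_le n _ _ p v Hnorm)
    (Q_le_N p) (Q_le_N v) (qpolar_sq_le n _ _ p v Hcut)).
  lra.
Qed.

Lemma rho_levi_lower_bound (mu : R) v : 0 <= mu ->
  (forall j, (1 <= j <= m)%nat -> 0 <= muj j) -> (forall j, (m + 1 <= j <= n)%nat -> muj j <= mu) ->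
  (1 - mu) * N v <= Rh v + Rh (Jmul v).
Proof.
  intros Hmu Hlo Hhi; unfold Rh, N; rewrite qform_Jmul, qform_add, <- qform_scal.
  apply qform_le; intros j Hj; unfold cst, rho_weight.
  destruct (Nat.leb_spec j m).
  - specialize (Hlo j ltac:(lia)); lra.
  - specialize (Hhi j ltac:(lia)); lra.
Qed.

Lemma strictly_psh_F (mu : R) : 0 <= mu ->
  (forall j, (1 <= j <= m)%nat -> 0 <= muj j) -> (forall j, (m + 1 <= j <= n)%nat -> muj j <= mu) ->
  (4 * M2 + 10 * M1) * d0 < 1 - mu ->
  strictly_psh_on n (ball_n n eps) F.
Proof.
  intros Hmu Hlo Hhi Hsmall p Hp v _ Hv.
  destruct (F_d2dir_lower_bound p v Hp) as [Hex Hd].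
  destruct (F_d2dir_lower_bound p (Jmul v) Hp) as [HexJ HdJ].
  split; [exact Hex | split; [exact HexJ |]].
  assert (HNJ : N (Jmul v) = N v) by apply qform_Jmul.
  pose proof (qform_norm_pos n v Hv) as HNv; fold N in HNv.
  pose proof (rho_levi_lower_bound mu v Hmu Hlo Hhi).
  assert ((4 * M2 + 10 * M1) * d0 * N v < (1 - mu) * N v) by now apply Rmult_lt_compat_r.
  rewrite HNJ in HdJ; unfold levi; lra.
Qed.

Variable mu' : R.
Hypothesis chi'_small : M1 * d0 < Rmin 1 mu'.
Hypothesis muj_lower : forall j, (1 <= j <= m)%nat -> mu' <= muj j.

Lemma critical_point_coords p : ball_n n eps p -> critical_point n F p ->
  (forall j, (1 <= j <= n)%nat -> fst p j = 0) /\ (forall j, (1 <= j <= m)%nat -> snd p j = 0).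
Proof.
  intros Hp Hcrit.
  assert (HE : 0 < eps ^ 2) by (apply pow_lt; lra).
  set (s := N p / eps ^ 2); set (c := Derive chi s * (Q p / eps ^ 2)).
  assert (Hc : Rabs c <= M1 * d0).
  { assert (HQ : 0 <= Q p / eps ^ 2 <= d0 * s).
    { destruct (Q_le_N p); unfold s, Rdiv; split.
      - apply Rmult_le_pos; [lra | left; now apply Rinv_0_lt_compat].
      - rewrite <- Rmult_assoc; apply Rmult_le_compat_r; [left; now apply Rinv_0_lt_compat | lra]. }
    pose proof (ball_ratio p Hp) as Hs; fold s in Hs.
    unfold c; rewrite Rabs_mult, (Rabs_pos_eq (Q p / eps ^ 2)) by lra.
    apply Rmult_le_compat; [apply Rabs_pos | lra | now apply chi'_bound | nra]. }
  assert (Hpartial : forall v, is_derive (fun t => F (padd p t v)) 0 0 ->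
                       Rh' p v + c * N' p v + chi s * Q' p v = 0).
  { intros v Hv; rewrite <- (is_derive_unique _ _ _ Hv), (is_derive_unique _ _ _ (F_derive_on_line p v)).
    unfold c, s; field; lra. }
  assert (Hmin : M1 * d0 < 1 /\ M1 * d0 < mu')
    by (pose proof (Rmin_l 1 mu'); pose proof (Rmin_r 1 mu'); lra).
  pose proof (Rabs_maj2 c).
  (* Along a coordinate axis the cutoff only rescales the partial derivative by 1 + c or mu_j + c. *)
  split; intros j Hj; [destruct (Hcrit j Hj) as [Hx _] | destruct (Hcrit j ltac:(lia)) as [_ Hy]].
  - apply Hpartial in Hx; unfold Rh', N', Q' in Hx; rewrite !qpolar_ex_dir in Hx by lia.
    unfold cst in Hx; assert (Hprod : 2 * fst p j * (1 + c) = 0) by lra.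
    destruct (Rmult_integral _ _ Hprod); lra.
  - apply Hpartial in Hy; unfold Rh', N', Q' in Hy; rewrite !qpolar_ey_dir in Hy by lia.
    unfold cst, rho_weight, cutoff_weight in Hy; replace (j <=? m)%nat with true in Hy
      by (symmetry; apply Nat.leb_le; lia).
    specialize (muj_lower j Hj).
    assert (Hprod : 2 * snd p j * (muj j + c) = 0) by lra.
    destruct (Rmult_integral _ _ Hprod); lra.
Qed.

Lemma critical_value_nonpos p :
  (forall j, (m + 1 <= j <= n)%nat -> delta j <= muj j) ->
  ball_n n eps p -> critical_point n F p -> F p <= 0.
Proof.
  intros Hdelta Hp Hcrit; destruct (critical_point_coords p Hp Hcrit) as [Hx Hy].
  unfold F; rewrite rho_qform, psi_qform by exact m_le_n; fold Rh N Q.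
  assert (Hchi : chi (N p / eps ^ 2) * Q p <= Q p)
    by (destruct (chi_range (N p / eps ^ 2)); destruct (Q_le_N p); nra).
  enough (Rh p + Q p <= 0) by lra.
  unfold Rh, Q; rewrite qform_add; unfold qform.
  rewrite <- (sum_n_m_zeroR 1 n); apply sum_n_m_le_loc; intros j Hj.
  rewrite (Hx j Hj); unfold cst, rho_weight, cutoff_weight.
  destruct (Nat.leb_spec j m).
  - rewrite (Hy j ltac:(lia)); lra.
  - specialize (Hdelta j ltac:(lia)); pose proof (pow2_ge_0 (snd p j)); nra.
Qed.

End Deformation.

Theorem lemma6p2 (n m : nat) (chi : R -> R) (mu mu' : R) :
  (1 <= n)%nat -> (m <= n)%nat ->
  smooth chi -> (forall t, 0 <= chi t <= 1) ->
  (forall t, -1/2 <= t <= 1/2 -> chi t = 1) -> supp_in_m1_1 chi ->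
  0 < mu < 1 -> 0 < mu' ->
  exists delta0 : R, 0 < delta0 < 1 /\
    forall (eps : R) (muj delta : nat -> R),
      0 < eps < 1 ->
      (forall j, (1 <= j <= m)%nat -> mu' <= muj j <= 1) ->
      (forall j, (m + 1 <= j <= n)%nat -> 0 <= muj j <= mu) ->
      (forall j, (m + 1 <= j <= n)%nat -> 0 < delta j <= muj j /\ delta j < delta0) ->
      strictly_psh_on n (ball_n n eps)
        (fun p => rho n m muj p + psi n m chi eps delta p) /\
      (forall p, ball_n n eps p ->
         critical_point n (fun p => rho n m muj p + psi n m chi eps delta p) p ->
         rho n m muj p + psi n m chi eps delta p <= 0).
Proof.
  intros _ Hmn Hsmooth Hchi _ _ Hmu Hmu'.
  destruct (derivable_bounded_01 (Derive chi) (Hsmooth 2%nat)) as [M1 [HM1 Hchi']].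
  destruct (derivable_bounded_01 (Derive (Derive chi)) (Hsmooth 3%nat)) as [M2 [HM2 Hchi'']].
  destruct (small_factor (4 * M2 + 10 * M1) (Rmin (1 - mu) mu'))
    as [d0 [Hd0 Hsmall]]; [lra | apply Rmin_glb_lt; lra |].
  pose proof (Rmin_l (1 - mu) mu'); pose proof (Rmin_r (1 - mu) mu').
  assert (HM1d0 : M1 * d0 < Rmin 1 mu') by (apply Rmin_glb_lt; nra).
  exists d0; split; [exact Hd0 |].
  intros eps muj delta Heps Hlow Hhigh Hdelta.
  assert (Hdelta0 : forall j, (m + 1 <= j <= n)%nat -> 0 <= delta j <= d0)
    by (intros j Hj; specialize (Hdelta j Hj); lra).
  assert (Hdelta_muj : forall j, (m + 1 <= j <= n)%nat -> delta j <= muj j)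
    by (intros j Hj; specialize (Hdelta j Hj); lra).
  assert (Hlow0 : forall j, (1 <= j <= m)%nat -> 0 <= muj j)
    by (intros j Hj; specialize (Hlow j Hj); lra).
  assert (Hlow' : forall j, (1 <= j <= m)%nat -> mu' <= muj j)
    by (intros j Hj; specialize (Hlow j Hj); lra).
  assert (Hhigh' : forall j, (m + 1 <= j <= n)%nat -> muj j <= mu)
    by (intros j Hj; specialize (Hhigh j Hj); lra).
  assert (Heps0 : 0 < eps) by lra.
  split.
  - exact (strictly_psh_F n m muj delta chi eps Hmn Hsmooth Heps0 M1 M2 d0 Hchi Hchi' Hchi''
             (Rlt_le _ _ (proj1 Hd0)) Hdelta0 mu (Rlt_le _ _ (proj1 Hmu)) Hlow0 Hhigh' ltac:(lra)).
  - intro p; exact (critical_value_nonpos n m muj delta chi eps Hmn Hsmooth Heps0 M1 d0 Hchi Hchi'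
             (Rlt_le _ _ (proj1 Hd0)) Hdelta0 mu' HM1d0 Hlow' p Hdelta_muj).
Qed.
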